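(* Let $R$ be a ring with unity and involution $*$, and let $a\in R$. The following statements are equivalent. (1) $a$ is left dual core invertible. (2) $a^2$ is strongly left $(a^*,a)$-invertible. (3) $a^2$ is strongly left $(a^*,1)$-invertible. (4) $a$ is strongly left $(a^*,a)$-invertible.
   Context: $a$ is left dual core invertible if there exists $x\in R$ with $axa=a$, $(xa)^*=xa$ and $x^2a=x$. For $u,b,c\in R$, $u$ is strongly left $(b,c)$-invertible if $b\in Rcub$ and $cub$ is regular (there exists $z$ with $cub\,z\,cub=cub$). *)

From mathcomp Require Import all_boot all_algebra.
Set Implicit Arguments. Unset Strict Implicit. Unset Printing Implicit Defensive.
Import GRing.Theory.
Local Open Scope ring_scope.

Definition involution (R : pzRingType) (star : R -> R) : Prop :=
  [/\ forall x y : R, star (x + y) = star x + star y,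
      forall x y : R, star (x * y) = star y * star x
    & forall x : R, star (star x) = x].

Definition left_dual_core_invertible (R : pzRingType) (star : R -> R) (a : R) : Prop :=
  exists x : R, [/\ a * x * a = a, star (x * a) = x * a & x ^+ 2 * a = x].

Definition regular (R : pzRingType) (y : R) : Prop := exists z : R, y * z * y = y.

Definition strongly_left_inv (R : pzRingType) (u b c : R) : Prop :=
  (exists r : R, b = r * (c * u * b)) /\ regular (c * u * b).

From mathcomp Require Import all_boot all_algebra.
Import GRing.Theory.
Local Open Scope ring_scope.

(* Strong left (b, c)-invertibility of u just says that b = b w (c u b) for
   some w.  For (4) => (1), such a w yields p = a* w a^2 with p a* = a*;
   applying the involution shows that p is Hermitian and a p = a, so
   x = a* w a is a left dual core inverse with x a = p.  For (1) => (2), a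
   left dual core inverse x gives the witness w = x* x^3.  The remaining
   implications only move factors between u and c. *)

Section StronglyLeftInvertible.
Variable R : pzRingType.
Implicit Types u b c d : R.

Lemma strongly_left_invP u b c :
  strongly_left_inv u b c <-> exists w, b * w * (c * u * b) = b.
Proof.
split=> [[[r br] [z yzy]] | [w bwy]].
  by exists z; rewrite {1}br [in RHS]br -[in RHS]yzy !mulrA.
split; first by exists (b * w); rewrite bwy.
by exists w; rewrite -!mulrA; rewrite -!mulrA in bwy; rewrite bwy.
Qed.

Lemma strongly_left_inv_mull u b c d :
  strongly_left_inv u b (c * d) -> strongly_left_inv u b d.
Proof.
move=> /strongly_left_invP[w bwy]; apply/strongly_left_invP.
by exists (w * c); rewrite -[RHS]bwy !mulrA.
Qed.

End StronglyLeftInvertible.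

Section Involution.
Variables (R : pzRingType) (star : R -> R).
Hypothesis star_inv : involution star.

Let starM x y : star (x * y) = star y * star x.
Proof. by case: star_inv. Qed.

Let starK x : star (star x) = x.
Proof. by case: star_inv. Qed.

Lemma star_absorb_hermitian p q a :
  p = q * a -> p * star a = star a -> star p = p /\ a * p = a.
Proof.
move=> pE p_absorb.
have a_absorb : a * star p = a by have := congr1 star p_absorb; rewrite starM !starK.
have p_starp : p * star p = p by rewrite {1}pE -mulrA a_absorb pE.
have starp : star p = p by rewrite -{1}p_starp starM starK p_starp.
by split; rewrite // -{1}starp a_absorb.
Qed.

Lemma strongly_left_inv_ldc a :
  strongly_left_inv a (star a) a -> left_dual_core_invertible star a.
Proof.
move=> /strongly_left_invP[w bwy].
set x := star a * w * a.
have [xa_herm a_xa] : star (x * a) = x * a /\ a * (x * a) = a.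
  by apply: (star_absorb_hermitian _ x); rewrite // -[RHS]bwy !mulrA.
exists x; split => //; first by rewrite -mulrA.
by rewrite expr2 -mulrA {1}(_ : x = star a * w * a) // -mulrA a_xa.
Qed.

Lemma ldc_strongly_left_inv a :
  left_dual_core_invertible star a -> strongly_left_inv (a ^+ 2) (star a) a.
Proof.
case=> x [axa xa_herm xxa]; apply/strongly_left_invP.
exists (star x * x ^+ 3).
have star_ax : star a * star x = x * a by rewrite -starM.
have xa_star : x * a * star a = star a.
  by rewrite -[in RHS]axa !starM mulrA star_ax.
have x3a3 : x ^+ 3 * a ^+ 3 = x * a.
  have x3a2 : x ^+ 3 * a ^+ 2 = x.
    by rewrite exprS [a ^+ 2]expr2 mulrA -(mulrA x) xxa -expr2 xxa.
  by rewrite [a ^+ 3]exprSr mulrA x3a2.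
have xa_idem : x * a * (x * a) = x * a by rewrite mulrA -(mulrA x a) -mulrA axa.
rewrite -exprS.
have -> : star a * (star x * x ^+ 3) * (a ^+ 3 * star a)
          = star a * star x * (x ^+ 3 * a ^+ 3) * star a by rewrite !mulrA.
by rewrite star_ax x3a3 xa_idem xa_star.
Qed.

End Involution.

Theorem corollary3p13 (R : pzRingType) (star : R -> R)
    (Hstar : involution star) (a : R) :
  [<-> left_dual_core_invertible star a;
       strongly_left_inv (a ^+ 2) (star a) a;
       strongly_left_inv (a ^+ 2) (star a) 1;
       strongly_left_inv a (star a) a].
Proof.
tfae.
- exact: ldc_strongly_left_inv.
- by move=> ?; apply: (@strongly_left_inv_mull _ _ _ a); rewrite mulr1.
- by rewrite /strongly_left_inv expr2 mul1r.
- exact: strongly_left_inv_ldc.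
Qed.
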